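(* Let $\Delta\ge 3$ be an integer and let $G\in\mathcal{G}_\Delta$. Let $c_1,\dots,c_\Delta$ be the real numbers defined by $c_\Delta=\frac{1}{\Delta}$ and $ic_i+c_{i+1}=1$ for $i=1,\dots,\Delta-1$. Then $$\alpha(G)\ge \sum_{i=1}^{\Delta} c_i|V_i(G)|.$$
   Context: All graphs are simple, finite and undirected. For an integer $\Delta\ge 3$, $\mathcal{G}_\Delta$ denotes the set of connected graphs $G\neq K_{\Delta+1}$ with maximum degree $\Delta$. For a graph $G$ and $i\ge 1$, $V_i(G)$ is the set of vertices of $G$ of degree $i$. $\alpha(G)$ is the independence number of $G$. *)

From mathcomp Require Import all_boot all_order all_algebra.
Set Implicit Arguments. Unset Strict Implicit. Unset Printing Implicit Defensive.

Section Graphs.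
Variable T : finType.
Implicit Types (e : rel T) (S : {set T}).

Definition simple_graph e : Prop := symmetric e /\ irreflexive e.

Definition connected_graph e : Prop := forall x y : T, connect e x y.

Definition deg e (x : T) : nat := #|[set y | e x y]|.
Definition Vdeg e (i : nat) : {set T} := [set x | deg e x == i].

Definition max_degree e : nat := \max_(x : T) deg e x.

Definition is_complete_graph e (n : nat) : Prop :=
  #|T| = n /\ (forall x y : T, x != y -> e x y).

Definition independent e S : bool := [forall x in S, forall y in S, ~~ e x y].

Definition alpha e : nat := \max_(S : {set T} | independent e S) #|S|.
End Graphs.

(* For a vertex set S, give a vertex x of G[S] the weight 1/(k+1) if x lies in a
   clique component K_{k+1} of G[S], and c_k otherwise, k being its degree in
   G[S]; we show by induction on |S| that these weights sum to at most
   alpha(G[S]).  Components are treated separately, and a clique component has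
   total weight 1.  If a vertex v of minimum degree k has a neighbour of larger
   degree, the closed neighbourhood N[v] weighs at most k c_k + c_(k+1) = 1,
   deleting it lowers alpha by at least one, and the remaining vertices gain
   weight in total (c is nonincreasing, and each new clique component already
   weighed at most 1).  Otherwise G[S] is k-regular and not complete: for
   k < Delta, greedily colouring G[S] - v gives |S| <= k alpha + 1, enough
   because (2k+1) c_k <= 2; for k = Delta, Brooks' theorem, proved with Kempe
   chains, gives |S| <= Delta alpha.  Finally, G has no clique component, so
   the weights of G are the c_(deg x). *)

From mathcomp Require Import all_boot all_order all_algebra.
From mathcomp Require Import perm zify lra.
Import Order.TTheory GRing.Theory Num.Theory.
Set Implicit Arguments. Unset Strict Implicit. Unset Printing Implicit Defensive.

Lemma setD_proper (T : finType) (S A : {set T}) x : x \in A -> x \in S -> S :\: A \proper S.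
Proof.
by move=> xA xS; apply: sub_proper_trans (properD1 xS); apply: setDS; rewrite sub1set.
Qed.

Section InducedConnectivity.
Variables (T : finType) (r : rel T).
Implicit Types (A X : {set T}) (x y : T).

Definition nbh X x := [set y in X | r x y].

Definition closed_in X A := forall p q, p \in A -> q \in X -> r p q -> q \in A.

Definition connected_in X := forall A, A \subset X -> A != set0 -> A != X ->
  exists p q, [/\ p \in A, q \in X :\: A & r p q].

Lemma nbh_setD1 X a x : nbh (X :\ a) x = nbh X x :\ a.
Proof. by apply/setP => y; rewrite !inE andbA. Qed.

Lemma nbh_subset X X' x : X' \subset X -> nbh X' x \subset nbh X x.
Proof.
by move=> sX; apply/subsetP => y; rewrite !inE => /andP[/(subsetP sX) -> ->].
Qed.

Lemma connected_in_closed X A : connected_in X -> A \subset X -> A != set0 ->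
  closed_in X A -> A = X.
Proof.
move=> cX sAX A0 clA; apply/eqP/negPn/negP => AX.
have [p [q [pA /setDP[qX qA] rpq]]] := cX A sAX A0 AX.
by rewrite (clA p q pA qX rpq) in qA.
Qed.

Lemma closed_or_connected_in X :
  (exists A, [/\ A \subset X, A != set0, A != X & closed_in X A]) \/ connected_in X.
Proof.
case: (boolP [exists A : {set T}, [&& A \subset X, A != set0, A != X &
    [forall p in A, forall q in X, r p q ==> (q \in A)]]]).
  move=> /existsP[A /and4P[sAX A0 AX /forall_inP clA]]; left; exists A.
  split=> // p q pA qX.
  by move/forall_inP: (clA p pA) => /(_ q qX)/implyP.
rewrite negb_exists => /forallP noA; right => A sAX A0 AX.
move: (noA A); rewrite sAX A0 AX /= negb_forall_in => /existsP[p /andP[pA]].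
rewrite negb_forall_in => /existsP[q /andP[qX]]; rewrite negb_imply => /andP[rpq qA].
by exists p, q; rewrite inE qA qX.
Qed.

Lemma connect_exit A p q : connect r p q -> p \in A -> q \notin A ->
  exists p' q', [/\ p' \in A, q' \notin A, r p' q' & connect r p q'].
Proof.
move=> /connectP [s]; elim: s p => [|x s IH] p /= pth lst pA qA.
  by rewrite lst pA in qA.
case/andP: pth => rpx pth; case xA: (x \in A).
  have [p' [q' [p'A q'A rpq' xq']]] := IH x pth lst xA qA.
  by exists p', q'; split=> //; apply: connect_trans (connect1 rpx) xq'.
by exists p, x; rewrite xA connect1.
Qed.

Lemma connected_in_sub_class X x : connected_in X -> x \in X ->
  X \subset [set y | connect r x y].
Proof.
move=> cX xX; rewrite -(connected_in_closed (A := X :&: [set y | connect r x y]) cX).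
- exact: subsetIr.
- exact: subsetIl.
- by apply/set0Pn; exists x; rewrite !inE xX connect0.
move=> p q; rewrite !inE => /andP[_ xp] -> rpq.
exact: connect_trans xp (connect1 rpq).
Qed.

Hypothesis r_sym : symmetric r.

Lemma connected_in_class x : connected_in [set y | connect r x y].
Proof.
move=> A sAX A0 AX; have [p pA] := set0Pn _ A0.
have [q /setDP[qX qA]] : exists q, q \in [set y | connect r x y] :\: A.
  by apply/set0Pn; apply: contra AX; rewrite setD_eq0 eqEsubset sAX.
have xp : connect r x p by move: (subsetP sAX p pA); rewrite inE.
have pq : connect r p q.
  by rewrite inE in qX; apply: connect_trans qX; rewrite (sym_connect_sym r_sym).
have [p' [q' [p'A q'A rpq' pq']]] := connect_exit pq pA qA.
by exists p', q'; rewrite !inE q'A (connect_trans xp pq').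
Qed.

Lemma connected_in_delete_leaf X a b : connected_in X -> a \in X ->
  (forall z, z \in X -> r a z -> z = b) -> connected_in (X :\ a).
Proof.
move=> cX aX leaf A sA A0 AX.
have sAX : A \subset X by apply: subset_trans sA (subsetDl _ _).
have aA : a \notin A by apply/negP => /(subsetP sA); rewrite !inE eqxx.
have [w] : exists w, w \in (X :\ a) :\: A.
  by apply/set0Pn; apply: contra AX; rewrite setD_eq0 eqEsubset sA.
rewrite !inE => /andP[wA /andP[wa wX]].
case bA: (b \in A).
  have sBX : a |: A \subset X by rewrite subUset sub1set aX sAX.
  have B0 : a |: A != set0 by apply/set0Pn; exists a; rewrite !inE eqxx.
  have BX : a |: A != X.
    by apply: contraTneq wX => <-; rewrite !inE (negbTE wa) (negbTE wA).
  have [p [q [pB /setDP[qX qB] rpq]]] := cX _ sBX B0 BX.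
  move: pB qB; rewrite !inE negb_or => /orP[/eqP pa|pA] /andP[qa qA].
    by move: rpq; rewrite pa => /(leaf q qX) qb; rewrite qb bA in qA.
  by exists p, q; rewrite !inE qA qa qX.
have AX' : A != X by apply: contraNneq aA => ->.
have [p [q [pA /setDP[qX qA] rpq]]] := cX _ sAX A0 AX'.
case: (eqVneq q a) => [qa|qa]; last by exists p, q; rewrite !inE qA qa qX.
by move: rpq; rewrite qa r_sym => /(leaf p (subsetP sAX p pA)) pb; rewrite -pb pA in bA.
Qed.

Lemma pendant_pair X a b : connected_in X -> a \in X -> b \in X ->
  nbh X a = [set b] -> nbh X b = [set a] -> X = [set a; b].
Proof.
move=> cX aX bX Na Nb; apply/esym/(connected_in_closed cX).
- by rewrite subUset !sub1set aX bX.
- by apply/set0Pn; exists a; rewrite !inE eqxx.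
move=> p q; rewrite !inE => /orP[]/eqP-> qX rpq.
  have : q \in nbh X a by rewrite inE qX rpq.
  by rewrite Na inE => ->; rewrite orbT.
have : q \in nbh X b by rewrite inE qX rpq.
by rewrite Nb inE => ->.
Qed.

Lemma no_three_leaves X a b c : connected_in X -> {in X, forall y, #|nbh X y| <= 2} ->
  a \in X -> b \in X -> c \in X -> a != b -> a != c -> b != c ->
  #|nbh X a| = 1 -> #|nbh X b| = 1 -> #|nbh X c| = 1 -> False.
Proof.
have [n] := ubnP #|X|; elim: n X a b c => // n IH X a b c ltXn conX deg2
  aX bX cX ab ac bc da db dc.
have [y Na] := cards1P (introT eqP da).
have /setIdP[yX ay] : y \in nbh X a by rewrite Na set11.
have leaf z : z \in X -> r a z -> z = y.
  by move=> zX az; apply/set1P; rewrite -Na inE zX az.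
have ya : a \in nbh X y by rewrite inE aX r_sym.
have [dy1|dy2] : #|nbh X y| = 1 \/ #|nbh X y| = 2.
  have := deg2 y yX; have : 0 < #|nbh X y| by apply/card_gt0P; exists a.
  by case: #|_| => [|[|[|]]] //; [left | right].
- have [z Ny] := cards1P (introT eqP dy1).
  have Ny' : nbh X y = [set a] by move: ya; rewrite Ny => /set1P <-.
  move: bX cX; rewrite (pendant_pair conX aX yX Na Ny') !inE ![_ == a]eq_sym.
  by rewrite (negbTE ab) (negbTE ac) /= => /eqP b_y /eqP c_y; rewrite b_y c_y eqxx in bc.
have not_y z : #|nbh X z| = 1 -> z != y by move=> dz; apply/eqP => zy; rewrite zy dy2 in dz.
have deg_del z : z \in X -> z != y -> #|nbh (X :\ a) z| = #|nbh X z|.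
  move=> zX zy; rewrite nbh_setD1 [RHS](cardsD1 a) inE r_sym aX /=.
  case: (boolP (r a z)) => [/(leaf z zX) zy'|_]; last by rewrite add0n.
  by rewrite zy' eqxx in zy.
apply: (IH (X :\ a) y b c).
- by move: ltXn; rewrite (cardsD1 a X) aX.
- exact: connected_in_delete_leaf conX aX leaf.
- move=> z /setD1P[_ zX]; apply: leq_trans (deg2 z zX).
  by apply: subset_leq_card; apply: nbh_subset; apply: subsetDl.
- by rewrite !inE yX andbT; apply/eqP => y_a; rewrite y_a da in dy2.
- by rewrite !inE bX andbT eq_sym.
- by rewrite !inE cX andbT eq_sym.
- by rewrite eq_sym not_y.
- by rewrite eq_sym not_y.
- exact: bc.
- by move: dy2; rewrite nbh_setD1 (cardsD1 a) ya => -[].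
- by rewrite deg_del ?not_y.
- by rewrite deg_del ?not_y.
Qed.

End InducedConnectivity.

Lemma connected_in_sub_rel (T : finType) (r r' : rel T) X :
  connected_in r X -> {in X &, forall p q, r p q -> r' p q} -> connected_in r' X.
Proof.
move=> cX rr' A sAX A0 AX; have [p [q [pA qXA rpq]]] := cX A sAX A0 AX.
exists p, q; split=> //; apply: rr' rpq; first exact: (subsetP sAX).
by case/setDP: qXA.
Qed.

Section Graph.
Variables (T : finType) (e : rel T).
Hypotheses (e_sym : symmetric e) (e_irr : irreflexive e).
Implicit Types (A I S : {set T}) (x y : T).

Local Notation deg_in S x := #|nbh e S x|.

Lemma independentP I :
  reflect {in I &, forall x y, ~~ e x y} (independent e I).
Proof.
apply: (iffP forall_inP) => [indI x y xI yI|indI x xI].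
  by move/forall_inP: (indI x xI); apply.
by apply/forall_inP => y yI; apply: indI.
Qed.

Definition alpha_on S := \max_(I : {set T} | (I \subset S) && independent e I) #|I|.

Lemma alpha_on_max S I : I \subset S -> independent e I -> #|I| <= alpha_on S.
Proof.
by move=> sIS indI; apply: (leq_bigmax_cond (F := fun J : {set T} => #|J|)); rewrite sIS.
Qed.

Lemma alpha_onP S : exists I, [/\ I \subset S, independent e I & #|I| = alpha_on S].
Proof.
have indS0 : (set0 \subset S) && independent e set0.
  by rewrite sub0set; apply/independentP => x; rewrite inE.
have : 0 < #|[pred J : {set T} | (J \subset S) && independent e J]|.
  by apply/card_gt0P; exists set0.
case/(eq_bigmax_cond (fun J : {set T} => #|J|)) => I /andP[sIS indI] maxI.
by exists I.
Qed.

Lemma alpha_on_setT : alpha_on setT = alpha e.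
Proof. by apply: eq_bigl => I; rewrite subsetT. Qed.

Lemma alpha_on_gt0 S : S != set0 -> 0 < alpha_on S.
Proof.
case/set0Pn => x xS; apply: leq_trans (alpha_on_max (I := [set x]) _ _).
- by rewrite cards1.
- by rewrite sub1set.
by apply/independentP => a b /set1P-> /set1P->; rewrite e_irr.
Qed.

Lemma alpha_on_disjoint_union S A : A \subset S ->
  {in A & S :\: A, forall x y, ~~ e x y} -> alpha_on A + alpha_on (S :\: A) <= alpha_on S.
Proof.
move=> sAS noE.
have [I [sIA indI <-]] := alpha_onP A.
have [J [sJ indJ <-]] := alpha_onP (S :\: A).
have sJS : J \subset S := subset_trans sJ (subsetDl S A).
have IJ : [disjoint I & J].
  apply/pred0P => x /=; apply/negP => /andP[/(subsetP sIA) xA /(subsetP sJ)].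
  by rewrite inE xA.
rewrite -cardsUI (disjoint_setI0 IJ) cards0 addn0; apply: alpha_on_max.
  by rewrite subUset (subset_trans sIA sAS) sJS.
apply/independentP => x y /setUP[xI|xJ] /setUP[yI|yJ].
- exact: (independentP _ indI).
- exact: noE (subsetP sIA x xI) (subsetP sJ y yJ).
- by rewrite e_sym; exact: noE (subsetP sIA y yI) (subsetP sJ x xJ).
- exact: (independentP _ indJ).
Qed.

Definition cnbh S x := x |: nbh e S x.

Lemma cnbh_id S x : x \in cnbh S x.
Proof. exact: setU11. Qed.

Lemma notin_nbh S x : x \notin nbh e S x.
Proof. by rewrite inE e_irr andbF. Qed.

Lemma card_cnbh S x : #|cnbh S x| = (deg_in S x).+1.
Proof. by rewrite cardsU1 notin_nbh. Qed.

Lemma cnbh_subset S x : x \in S -> cnbh S x \subset S.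
Proof. by move=> xS; apply/subsetP => y /setU1P[->//|/setIdP[]]. Qed.

Lemma alpha_on_delete_cnbh S v : v \in S -> (alpha_on (S :\: cnbh S v)).+1 <= alpha_on S.
Proof.
move=> vS; have [I [sI indI <-]] := alpha_onP (S :\: cnbh S v).
have vI : v \notin I by apply: contraTN (cnbh_id S v) => /(subsetP sI)/setDP[].
suff : #|v |: I| <= alpha_on S by rewrite cardsU1 vI add1n.
apply: alpha_on_max.
  by rewrite subUset sub1set vS (subset_trans sI (subsetDl _ _)).
have far y : y \in I -> ~~ e v y.
  by move=> /(subsetP sI)/setDP[yS]; rewrite !inE yS andTb negb_or => /andP[].
apply/independentP => x y /setU1P[->|xI] /setU1P[->|yI].
- by rewrite e_irr.
- exact: far.
- by rewrite e_sym far.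
- exact: (independentP _ indI).
Qed.

Definition proper_colouring d S (col : T -> 'I_d) :=
  {in S &, forall x y, e x y -> col x != col y}.

Definition colour_class d S (col : T -> 'I_d) k := [set x in S | col x == k].

Lemma colour_class_subset d S (col : T -> 'I_d) k : colour_class S col k \subset S.
Proof. by apply/subsetP => x /setIdP[]. Qed.

Lemma card_colour_classes d S (col : T -> 'I_d) :
  #|S| = \sum_(k < d) #|colour_class S col k|.
Proof.
rewrite -sum1_card (partition_big col predT) //=; apply: eq_bigr => k _.
by rewrite -sum1_card; apply: eq_bigl => x; rewrite inE.
Qed.

Lemma colour_class_independent d S (col : T -> 'I_d) k :
  proper_colouring S col -> independent e (colour_class S col k).
Proof.
move=> pcol; apply/independentP => x y /setIdP[xS /eqP xk] /setIdP[yS /eqP yk].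
by apply/negP => /(pcol x y xS yS); rewrite xk yk eqxx.
Qed.

Lemma card_le_mul_alpha_on d S S' (col : T -> 'I_d) :
  proper_colouring S col -> S \subset S' -> #|S| <= d * alpha_on S'.
Proof.
move=> pcol sS; rewrite (card_colour_classes S col).
rewrite -[X in _ <= X * _]card_ord -sum_nat_const.
apply: leq_sum => k _; apply: alpha_on_max; last exact: colour_class_independent.
exact: subset_trans (colour_class_subset _ _ _) sS.
Qed.

Lemma deg_in_subset S S' x : S' \subset S -> deg_in S' x <= deg_in S x.
Proof. by move=> sS; apply/subset_leq_card/nbh_subset. Qed.

Lemma deg_in_delete_lt S x y : x \in nbh e S y -> deg_in (S :\ x) y < deg_in S y.
Proof. by move=> xy; rewrite nbh_setD1 [X in _ < X](cardsD1 x) xy. Qed.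

Definition deficient S d := forall A, A \subset S -> A != set0 -> closed_in e S A ->
  exists2 x, x \in A & deg_in S x < d.

Lemma deficient_delete S d x : {in S, forall y, deg_in S y <= d} -> deficient S d ->
  deficient (S :\ x) d.
Proof.
move=> degS defS A sA A0 clA.
have sAS : A \subset S := subset_trans sA (subsetDl S _).
have [/exists_inP[a aA xa]|noX] := boolP [exists a in A, x \in nbh e S a].
  by exists a => //; apply: leq_trans (deg_in_delete_lt xa) (degS a (subsetP sAS a aA)).
have [y yA dy] : exists2 y, y \in A & deg_in S y < d.
  apply: defS => // p q pA qS epq; apply: (clA p q pA _ epq); rewrite !inE qS andbT.
  by apply: contraNneq noX => <-; apply/exists_inP; exists p; rewrite // inE qS.
by exists y => //; apply: leq_ltn_trans (deg_in_subset y (subsetDl S _)) dy.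
Qed.

Lemma connected_in_deficient S d v : connected_in e S ->
  {in S, forall y, deg_in S y <= d} -> v \in S -> deficient (S :\ v) d.
Proof.
move=> cS degS vS A sA A0 clA.
have sAS : A \subset S := subset_trans sA (subsetDl S _).
have AS : A != S.
  by apply/eqP => AS; have := subsetP sA v; rewrite AS vS !inE eqxx => /(_ isT).
have [p [q [pA /setDP[qS qA] epq]]] := cS A sAS A0 AS.
have qv : q = v.
  by apply/eqP; apply: contraNT qA => qv; apply: clA pA _ epq; rewrite !inE qv.
exists p => //; apply: leq_trans (deg_in_delete_lt _) (degS p (subsetP sAS p pA)).
by rewrite -qv inE qS.
Qed.

Lemma proper_colouring_extend d S x (col : T -> 'I_d) :
  proper_colouring (S :\ x) col -> deg_in (S :\ x) x < d ->
  exists col' : T -> 'I_d, proper_colouring S col'.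
Proof.
move=> pcol dx.
have [k kN] : exists k, k \notin col @: nbh e (S :\ x) x.
  apply/existsP; rewrite -negb_forall; apply/negP => /forallP used.
  have : #|'I_d| <= #|col @: nbh e (S :\ x) x|.
    by apply/subset_leq_card/subsetP => k _; apply: used.
  by rewrite card_ord leqNgt (leq_ltn_trans (leq_imset_card _ _) dx).
have fresh w : w \in S :\ x -> e x w -> k != col w.
  by move=> wS exw; apply: contraNneq kN => ->; apply: imset_f; rewrite inE wS.
exists (fun y => if y == x then k else col y) => y z yS zS eyz /=.
have [yx|yx] := eqVneq y x; have [zx|zx] := eqVneq z x.
- by rewrite yx zx e_irr in eyz.
- by apply: fresh; [rewrite !inE zx | rewrite -yx].
- by rewrite eq_sym; apply: fresh; [rewrite !inE yx | rewrite -zx e_sym].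
- by apply: pcol; rewrite // !inE ?yx ?zx.
Qed.

Lemma greedy_colouring d S : 0 < d -> {in S, forall x, deg_in S x <= d} ->
  deficient S d -> exists col : T -> 'I_d, proper_colouring S col.
Proof.
move=> d0; have [n] := ubnP #|S|; elim: n S => // n IH S ltSn degS defS.
have [->|S0] := eqVneq S set0; first by exists (fun=> Ordinal d0) => x; rewrite inE.
have [x xS dx] := defS S (subxx S) S0 (fun p q _ qS _ => qS).
have [col pcol] : exists col : T -> 'I_d, proper_colouring (S :\ x) col.
  apply: IH; last exact: deficient_delete.
    by move: ltSn; rewrite (cardsD1 x S) xS.
  move=> y /setD1P[_ yS].
  exact: leq_trans (deg_in_subset y (subsetDl S _)) (degS y yS).
apply: proper_colouring_extend pcol _.
exact: leq_ltn_trans (deg_in_subset x (subsetDl S _)) dx.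
Qed.

Lemma regular_colouring_delete S d v : connected_in e S ->
  {in S, forall x, deg_in S x = d} -> 0 < d -> v \in S ->
  exists col : T -> 'I_d, proper_colouring (S :\ v) col.
Proof.
move=> cS S_reg d_gt0 vS; apply: greedy_colouring d_gt0 _ _.
  by move=> x /setD1P[_ xS]; rewrite -(S_reg x xS) deg_in_subset // subsetDl.
by apply: connected_in_deficient cS _ vS => x xS; rewrite S_reg.
Qed.

Lemma greedy_alpha_bound S d v : connected_in e S -> {in S, forall x, deg_in S x = d} ->
  0 < d -> v \in S -> #|S| <= d * alpha_on S + 1.
Proof.
move=> cS S_reg d_gt0 vS; have [col pcol] := regular_colouring_delete cS S_reg d_gt0 vS.
by rewrite (cardsD1 v) vS add1n addn1 ltnS (card_le_mul_alpha_on pcol (subsetDl S _)).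
Qed.

End Graph.

Lemma sum_excess n (t : 'I_n -> nat) k0 k1 k2 : k1 != k2 -> t k0 = 0 ->
  (forall k, k != k0 -> 0 < t k) -> n.-1 + (t k1).-1 + (t k2).-1 <= \sum_(k < n) t k.
Proof.
move=> k12 t0 t_gt0.
have tE k : t k = (k != k0) + (t k).-1.
  by have [->|/t_gt0/prednK] := eqVneq k k0; rewrite ?t0 // add1n => ->.
rewrite (eq_bigr _ (fun k _ => tE k)) big_split /= -addnA leq_add //.
  rewrite (bigD1 k0) //= eqxx add0n (eq_bigr (fun=> 1)) => [|k /negbTE->//].
  by rewrite sum_nat_const cardC1 card_ord muln1.
by rewrite (bigD1 k1) // (bigD1 k2) 1?eq_sym //= addnA leq_addr.
Qed.

Lemma tperm_pred2 (X : finType) (i j c : X) :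
  (c == i) || (c == j) -> (tperm i j c == i) || (tperm i j c == j).
Proof. by case: tpermP => [_|_|/eqP/negbTE-> /eqP/negbTE->]; rewrite ?eqxx ?orbT. Qed.

Lemma pred2_tperm (X : finType) (i j c c' : X) : (c == i) || (c == j) -> c' != c ->
  ((c' == i) || (c' == j)) = (c' == tperm i j c).
Proof.
case: tpermP => [->|->|/eqP/negbTE-> /eqP/negbTE->] // _ /negbTE c'c.
  by rewrite c'c.
by rewrite c'c orbF.
Qed.

Lemma tperm_neq (X : finType) (i j c : X) : i != j -> (c == i) || (c == j) ->
  tperm i j c != c.
Proof.
move=> ij; case: tpermP => [->|->|/eqP/negbTE-> /eqP/negbTE->] // _.
by rewrite eq_sym.
Qed.

Section Brooks.
Variables (T : finType) (e : rel T).
Hypotheses (e_sym : symmetric e) (e_irr : irreflexive e).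
Local Notation deg_in S x := #|nbh e S x|.

(* If d alpha(S) < |S|, then in a proper d-colouring of S - v every colour class
   is a maximum independent set of S, hence dominates S: v sees each colour
   exactly once and every other vertex sees every colour but its own.  Kempe
   chains between neighbours of v are then paths, and a swap along one of them
   is impossible when v has two non-adjacent neighbours. *)
Section TightColouring.
Variables (S : {set T}) (d : nat) (v : T).
Hypotheses (S_reg : {in S, forall x, deg_in S x = d}) (vS : v \in S).
Hypotheses (tight : d * alpha_on e S < #|S|) (d_gt2 : 2 < d).

Local Notation U := (S :\ v).
Local Notation N := (nbh e S v).

Lemma sub_U_S x : x \in U -> x \in S.
Proof. by case/setD1P. Qed.

Lemma nbh_v_subU : N \subset U.
Proof.
apply/subsetP => y /setIdP[yS evy]; rewrite !inE yS andbT.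
by apply: contraTneq evy => ->; rewrite e_irr.
Qed.

Lemma deg_in_U x : x \in S -> deg_in U x + (x \in N) = d.
Proof.
move=> xS; rewrite nbh_setD1 -(S_reg xS) [RHS](cardsD1 v) addnC.
by rewrite [x \in N]inE [v \in _]inE xS vS e_sym.
Qed.

Lemma third_colour (k1 k2 : 'I_d) : exists2 k, k != k1 & k != k2.
Proof.
have /card_gt0P[k] : 0 < #|~: [set k1; k2]|.
  rewrite cardsCs setCK card_ord cards2 subn_gt0.
  by case: (_ != _); apply: leq_trans d_gt2.
by rewrite !inE negb_or => /andP[kk1 kk2]; exists k.
Qed.

Section Colouring.
Variable col : T -> 'I_d.
Hypothesis col_proper : proper_colouring e U col.

Lemma alpha_on_le_colour_class k : alpha_on e S <= #|colour_class U col k|.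
Proof.
have d_gt0 : 0 < d by apply: leq_trans d_gt2.
have : \sum_(j < d | j != k) #|colour_class U col j| <= \sum_(j < d | j != k) alpha_on e S.
  apply: leq_sum => j _; apply: alpha_on_max; last exact: colour_class_independent.
  exact: subset_trans (colour_class_subset _ _ _) (subsetDl S _).
rewrite sum_nat_const cardC1 card_ord; set others := \sum_(j < d | _) _ => le_others.
move: tight; rewrite (cardsD1 v S) vS add1n ltnS (card_colour_classes U col) (bigD1 k) //=.
by rewrite -{1}(prednK d_gt0) mulSn addnC -/others; lia.
Qed.

Lemma colour_class_dominating k x : x \in S -> x \notin colour_class U col k ->
  exists2 y, y \in colour_class U col k & e x y.
Proof.
move=> xS xk; case: (boolP [exists y in colour_class U col k, e x y]) => [/exists_inP//|].
rewrite negb_exists_in => /forall_inP far.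
have indI : independent e (x |: colour_class U col k).
  apply/independentP => a b /setU1P[->|aC] /setU1P[->|bC].
  - by rewrite e_irr.
  - exact: far.
  - by rewrite e_sym far.
  - by move/independentP: (colour_class_independent k col_proper); apply.
have : #|x |: colour_class U col k| <= alpha_on e S.
  apply: alpha_on_max indI; rewrite subUset sub1set xS.
  exact: subset_trans (colour_class_subset _ _ _) (subsetDl S _).
by rewrite cardsU1 xk add1n ltnNge alpha_on_le_colour_class.
Qed.

Lemma nbh_v_rainbow k : exists2 y, y \in N & col y = k.
Proof.
have vk : v \notin colour_class U col k by rewrite !inE eqxx.
have [y /setIdP[yU /eqP yk] vy] := colour_class_dominating vS vk.
by exists y; rewrite // inE sub_U_S.
Qed.

Lemma nbh_colour x k : x \in U -> k != col x -> exists2 y, y \in nbh e U x & col y = k.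
Proof.
move=> xU kx.
have xk : x \notin colour_class U col k by rewrite inE eq_sym (negbTE kx) andbF.
have [y /setIdP[yU /eqP yk] xy] := colour_class_dominating (sub_U_S xU) xk.
by exists y; rewrite // inE yU.
Qed.

Lemma colour_inj_nbh_v : {in N &, injective col}.
Proof.
apply/imset_injP; rewrite eqn_leq leq_imset_card S_reg //=.
rewrite -[X in X <= _]card_ord -cardsT; apply/subset_leq_card/subsetP => k _.
by have [y yN <-] := nbh_v_rainbow k; apply: imset_f.
Qed.

Definition ncol x k := #|colour_class (nbh e U x) col k|.

Lemma ncol_own x : x \in U -> ncol x (col x) = 0.
Proof.
move=> xU; apply/eqP; rewrite cards_eq0 -subset0.
apply/subsetP => y /setIdP[/setIdP[yU exy] /eqP cy].
by have := col_proper xU yU exy; rewrite cy eqxx.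
Qed.

Lemma ncol_gt0 x k : x \in U -> k != col x -> 0 < ncol x k.
Proof.
move=> xU kx; have [y yN yk] := nbh_colour xU kx.
by apply/card_gt0P; exists y; rewrite inE yN yk eqxx.
Qed.

Lemma ncol_excess x k1 k2 : x \in U -> k1 != k2 ->
  (ncol x k1).-1 + (ncol x k2).-1 + (x \in N) <= 1.
Proof.
move=> xU k12; have := sum_excess k12 (ncol_own xU) (fun k => ncol_gt0 xU).
rewrite -card_colour_classes; have := deg_in_U (sub_U_S xU).
have : 0 < d by apply: leq_trans d_gt2.
lia.
Qed.

Lemma ncol_le2 x k : x \in U -> ncol x k <= 2.
Proof.
move=> xU; have [k' k'k _] := third_colour k k; rewrite eq_sym in k'k.
by have := ncol_excess xU k'k; lia.
Qed.

Lemma ncol_nbh_v_le1 x k : x \in N -> ncol x k <= 1.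
Proof.
move=> xN; have [k' k'k _] := third_colour k k; rewrite eq_sym in k'k.
by have := ncol_excess (subsetP nbh_v_subU x xN) k'k; rewrite xN; lia.
Qed.

Lemma ncol_two_ge2 x k1 k2 : x \in U -> k1 != k2 -> 2 <= ncol x k1 -> 2 <= ncol x k2 ->
  False.
Proof. by move=> xU k12; have := ncol_excess xU k12; lia. Qed.

Definition bicoloured i j x := (x \in U) && ((col x == i) || (col x == j)).

Definition kempe_rel i j : rel T :=
  [rel x y | [&& bicoloured i j x, bicoloured i j y & e x y]].

Lemma kempe_rel_sym i j : symmetric (kempe_rel i j).
Proof. by move=> x y; apply/and3P/and3P => -[bx b_y exy]; rewrite e_sym. Qed.

Lemma bicolouredC i j x : bicoloured i j x = bicoloured j i x.
Proof. by rewrite /bicoloured orbC. Qed.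

Lemma kempe_relC i j : kempe_rel i j =2 kempe_rel j i.
Proof. by move=> x y; rewrite /kempe_rel /= !(bicolouredC i). Qed.

Definition kempe_chain i j p := [set y | connect (kempe_rel i j) p y].

Lemma kempe_chain_id i j p : p \in kempe_chain i j p.
Proof. by rewrite inE connect0. Qed.

Lemma kempe_chain_closed i j p y z :
  y \in kempe_chain i j p -> kempe_rel i j y z -> z \in kempe_chain i j p.
Proof. by rewrite !inE => py yz; apply: connect_trans py (connect1 yz). Qed.

Lemma kempe_chain_bicoloured j p y : p \in U -> y \in kempe_chain (col p) j p ->
  bicoloured (col p) j y.
Proof.
move=> pU; have [->|yp] := eqVneq y p; first by rewrite /bicoloured pU eqxx.
rewrite inE (sym_connect_sym (@kempe_rel_sym _ _)) => /connectP[[|z s] /=].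
  by move=> _ py; rewrite py eqxx in yp.
by case/andP => /andP[].
Qed.

Definition kempe_swap i j (A : {set T}) x := if x \in A then tperm i j (col x) else col x.

Lemma kempe_swap_proper j p : p \in U ->
  proper_colouring e U (kempe_swap (col p) j (kempe_chain (col p) j p)).
Proof.
move=> pU; set K := kempe_chain _ _ _.
have Kbi y : y \in K -> bicoloured (col p) j y by apply: kempe_chain_bicoloured.
have cross x y : x \in K -> y \in U -> y \notin K -> e x y ->
    tperm (col p) j (col x) != col y.
  move=> xK yU yK exy; have /andP[xU cx] := Kbi x xK.
  apply: contraNneq yK => cy; apply: (kempe_chain_closed xK).
  by rewrite /kempe_rel /= /bicoloured xU yU cx -cy tperm_pred2.
move=> x y xU yU exy; rewrite /kempe_swap.
case xK: (x \in K); case yK: (y \in K).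
- by rewrite (inj_eq perm_inj) col_proper.
- by apply: cross; rewrite ?yK.
- by rewrite eq_sym; apply: cross; rewrite ?xK // e_sym.
- exact: col_proper.
Qed.

End Colouring.

Lemma kempe_chain_connects (col : T -> 'I_d) p q : proper_colouring e U col ->
  p \in N -> q \in N -> col p != col q -> q \in kempe_chain col (col p) (col q) p.
Proof.
move=> pcol pN qN pq; apply: contraT => qK.
have pU := subsetP nbh_v_subU p pN.
have [y yN] := nbh_v_rainbow (kempe_swap_proper pcol (col q) pU) (col p).
rewrite /kempe_swap; case: ifPn => yK.
  move/(canRL (tpermK _ _)); rewrite tpermL => cyq.
  by move: yK; rewrite (colour_inj_nbh_v pcol yN qN cyq) (negbTE qK).
by move=> cyp; rewrite (colour_inj_nbh_v pcol yN pN cyp) kempe_chain_id in yK.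
Qed.

Section KempePaths.
Variable col : T -> 'I_d.
Hypothesis col_proper : proper_colouring e U col.

Local Notation K i j p := (kempe_chain col i j p).
Local Notation H i j := (kempe_rel col i j).

Lemma kempe_deg j p y : p \in U -> y \in K (col p) j p ->
  #|nbh (H (col p) j) (K (col p) j p) y| = ncol col y (tperm (col p) j (col y)).
Proof.
move=> pU yK; have /andP[yU ybi] := kempe_chain_bicoloured pU yK.
apply: eq_card => z; rewrite inE (andb_idl (kempe_chain_closed yK)) inE.
rewrite /kempe_rel /= /bicoloured yU ybi /= [z \in nbh _ _ _]inE.
case: (boolP (z \in U)) => //= zU; case: (boolP (e y z)) => eyz; rewrite ?andbF ?andbT //.
by apply: pred2_tperm ybi _; rewrite eq_sym col_proper.
Qed.

Lemma kempe_deg_gt0 j p y : p \in U -> col p != j -> y \in K (col p) j p ->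
  0 < #|nbh (H (col p) j) (K (col p) j p) y|.
Proof.
move=> pU pj yK; have /andP[yU ybi] := kempe_chain_bicoloured pU yK.
by rewrite kempe_deg // ncol_gt0 // tperm_neq.
Qed.

Lemma kempe_deg_nbh_v j p y : p \in U -> col p != j -> y \in K (col p) j p -> y \in N ->
  #|nbh (H (col p) j) (K (col p) j p) y| = 1.
Proof.
move=> pU pj yK yN; apply/eqP; rewrite eqn_leq kempe_deg_gt0 // kempe_deg //.
by rewrite ncol_nbh_v_le1.
Qed.

Lemma kempe_path p q x : p \in N -> q \in N -> col p != col q ->
  x \in K (col p) (col q) p -> x != p -> x != q ->
  2 <= ncol col x (tperm (col p) (col q) (col x)).
Proof.
move=> pN qN pq xK xp xq; have pU := subsetP nbh_v_subU p pN.
rewrite -kempe_deg // ltnNge; apply/negP => x_le1.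
have qK := kempe_chain_connects col_proper pN qN pq.
have cK : connected_in (H (col p) (col q)) (K (col p) (col q) p).
  exact: connected_in_class (@kempe_rel_sym _ _ _) p.
apply: (no_three_leaves (@kempe_rel_sym _ _ _) cK _ (kempe_chain_id _ _ _ _) qK xK).
- move=> y yK; rewrite kempe_deg // ncol_le2 //.
  by case/andP: (kempe_chain_bicoloured pU yK).
- by apply: contra pq => /eqP->.
- by rewrite eq_sym.
- by rewrite eq_sym.
- exact: kempe_deg_nbh_v pU pq (kempe_chain_id _ _ _ _) pN.
- exact: kempe_deg_nbh_v pU pq qK qN.
- by apply/eqP; rewrite eqn_leq x_le1 kempe_deg_gt0.
Qed.

Lemma kempe_chains_meet p q r x : p \in N -> q \in N -> r \in N ->
  col p != col q -> col p != col r -> col q != col r ->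
  x \in K (col p) (col q) p -> x \in K (col p) (col r) p -> x = p.
Proof.
move=> pN qN rN pq pr qr xKq xKr; have pU := subsetP nbh_v_subU p pN.
have /andP[xU cxq] := kempe_chain_bicoloured pU xKq.
have /andP[_ cxr] := kempe_chain_bicoloured pU xKr.
have cx : col x = col p.
  case/orP: cxq => /eqP // cxq; case/orP: cxr => /eqP // cxr.
  by rewrite -cxq -cxr eqxx in qr.
apply/eqP; apply: contraT => xp.
have xq : x != q by apply: contraNneq pq => <-; rewrite cx.
have xr : x != r by apply: contraNneq pr => <-; rewrite cx.
have := kempe_path pN qN pq xKq xp xq; have := kempe_path pN rN pr xKr xp xr.
by rewrite cx !tpermL => r2 q2; case: (ncol_two_ge2 col_proper xU qr q2 r2).
Qed.

Lemma kempe_chain_delete_end j p : p \in N -> col p != j ->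
  connected_in (H (col p) j) (K (col p) j p :\ p).
Proof.
move=> pN pj; have pU := subsetP nbh_v_subU p pN.
have jp : j != col p by rewrite eq_sym.
have [u /setIdP[uU epu] cu] := nbh_colour col_proper pU jp.
have cK : connected_in (H (col p) j) (K (col p) j p).
  exact: connected_in_class (@kempe_rel_sym _ _ _) p.
apply: (connected_in_delete_leaf (@kempe_rel_sym _ _ _) (b := u) cK).
  exact: kempe_chain_id.
move=> z _ /and3P[_ /andP[zU czp] epz].
have cz : col z = j.
  by case/orP: czp => /eqP // czp; move: (col_proper pU zU epz); rewrite czp eqxx.
have zA : z \in colour_class (nbh e U p) col j by rewrite inE cz eqxx andbT inE zU.
have uA : u \in colour_class (nbh e U p) col j by rewrite inE cu eqxx andbT inE uU.
by move/card_le1_eqP: (ncol_nbh_v_le1 col_proper j pN) => /(_ z u zA uA).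
Qed.

End KempePaths.

Lemma kempe_swap_keep (col : T -> 'I_d) p q r : proper_colouring e U col ->
  p \in N -> q \in N -> r \in N ->
  col p != col q -> col p != col r -> col q != col r ->
  {in kempe_chain col (col p) (col q) p :\ p,
    kempe_swap col (col p) (col r) (kempe_chain col (col p) (col r) p) =1 col}.
Proof.
move=> pcol pN qN rN pq pr qr y /setD1P[yp yK]; rewrite /kempe_swap ifN //.
by apply: contra yp => yKr; rewrite (kempe_chains_meet pcol pN qN rN pq pr qr yK yKr).
Qed.

Lemma kempe_contradiction (col : T -> 'I_d) v1 v2 : proper_colouring e U col ->
  v1 \in N -> v2 \in N -> v1 != v2 -> ~~ e v1 v2 -> False.
Proof.
move=> pcol v1N v2N v12 nev; have v1U := subsetP nbh_v_subU v1 v1N.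
have c12 : col v1 != col v2.
  by apply: contra v12 => /eqP/(colour_inj_nbh_v pcol v1N v2N)->.
have [c3 c31 c32] := third_colour (col v1) (col v2).
have [v3 v3N cv3] := nbh_v_rainbow pcol c3.
have c21 : col v2 != col v1 by rewrite eq_sym.
have [u /setIdP[uU ev1u] cu] := nbh_colour pcol v1U c21.
set K12 := kempe_chain col (col v1) (col v2) v1.
set col' := kempe_swap col (col v1) (col v3) (kempe_chain col (col v1) (col v3) v1).
have pcol' : proper_colouring e U col' := kempe_swap_proper pcol (col v3) v1U.
have keep : {in K12 :\ v1, col' =1 col}.
  by apply: (kempe_swap_keep pcol v1N v2N v3N c12); rewrite cv3 eq_sym.
have c'v1 : col' v1 = col v3 by rewrite /col' /kempe_swap kempe_chain_id tpermL.
have v2K : v2 \in K12 :\ v1 by rewrite in_setD1 eq_sym v12 kempe_chain_connects.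
have uK : u \in K12 :\ v1.
  rewrite in_setD1 (kempe_chain_closed (kempe_chain_id _ _ _ _)) ?andbT.
    by apply: contraTneq ev1u => ->; rewrite e_irr.
  by rewrite /kempe_rel /= /bicoloured v1U uU cu !eqxx orbT.
(* After swapping c1 and c3 on the (c1,c3)-chain of v1, only v1 changes colour on
   the (c1,c2)-chain of v1, so u ends up on two chains of v2 in the new colouring. *)
have [v3' v3'N c'v3'] := nbh_v_rainbow pcol' (col v1).
have uK1 : u \in kempe_chain col' (col' v2) (col' v3') v2.
  have conn' : connected_in (kempe_rel col' (col v2) (col v1)) (K12 :\ v1).
    apply: connected_in_sub_rel (kempe_chain_delete_end pcol v1N c12) _ => x y xK yK.
    by rewrite kempe_relC /kempe_rel /bicoloured /= !keep.
  have := subsetP (connected_in_sub_class conn' v2K) u uK.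
  by rewrite keep // c'v3'.
have uK2 : u \in kempe_chain col' (col' v2) (col' v1) v2.
  apply: (kempe_chain_closed (kempe_chain_connects pcol' v2N v1N _)).
    by rewrite keep // c'v1 eq_sym cv3.
  by rewrite /kempe_rel /= /bicoloured v1U uU (keep u uK) (keep v2 v2K) cu !eqxx orbT.
have := kempe_chains_meet pcol' v2N v3'N v1N _ _ _ uK1 uK2.
have [c13 c23] : col v1 != c3 /\ col v2 != c3 by rewrite ![_ == c3]eq_sym.
rewrite keep // c'v3' c'v1 cv3 => /(_ c21 c23 c13) uv2.
by move: ev1u; rewrite uv2 (negbTE nev).
Qed.

End TightColouring.

Lemma brooks_alpha_bound S d v v1 v2 : connected_in e S ->
  {in S, forall x, deg_in S x = d} ->
  2 < d -> v \in S -> v1 \in nbh e S v -> v2 \in nbh e S v -> v1 != v2 -> ~~ e v1 v2 ->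
  #|S| <= d * alpha_on e S.
Proof.
move=> cS S_reg d_gt2 vS v1N v2N v12 nev; rewrite leqNgt; apply/negP => tight.
have [col pcol] := regular_colouring_delete e_sym e_irr cS S_reg (ltnW (ltnW d_gt2)) vS.
exact: (kempe_contradiction S_reg vS tight d_gt2 pcol v1N v2N v12 nev).
Qed.

End Brooks.

Section Components.
Variables (T : finType) (e : rel T).
Hypothesis e_sym : symmetric e.
Implicit Types (A S : {set T}) (x y : T).
Local Notation deg_in S x := #|nbh e S x|.

Definition in_clique_component S x :=
  [forall y in cnbh e S x, cnbh e S y == cnbh e S x].

Lemma clique_componentP S x y : in_clique_component S x -> y \in cnbh e S x ->
  in_clique_component S y /\ cnbh e S y = cnbh e S x.
Proof.
move=> /forall_inP clx yx; have /eqP Ny := clx y yx.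
by split=> //; apply/forall_inP => z; rewrite Ny => /clx.
Qed.

Lemma isolated_clique_component S x : deg_in S x = 0 -> in_clique_component S x.
Proof.
move/eqP; rewrite cards_eq0 => /eqP Nx.
by apply/forall_inP => y; rewrite /cnbh Nx setU0 => /set1P->; rewrite Nx setU0.
Qed.

Lemma connected_in_clique_component S x : connected_in e S -> x \in S ->
  in_clique_component S x -> cnbh e S x = S.
Proof.
move=> cS xS clx; apply: connected_in_closed cS (cnbh_subset e xS) _ _.
  by apply/set0Pn; exists x; apply: cnbh_id.
move=> p q px qS epq; have [_ <-] := clique_componentP clx px.
by rewrite !inE qS epq orbT.
Qed.

Lemma nonadjacent_nbh_pair S : connected_in e S -> S != set0 ->
  {in S, forall x, ~~ in_clique_component S x} ->
  exists v v1 v2, [/\ v \in S, v1 \in nbh e S v, v2 \in nbh e S v, v1 != v2 & ~~ e v1 v2].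
Proof.
move=> cS S0 noclq.
case: (boolP [exists v in S, exists v1 in nbh e S v, exists v2 in nbh e S v,
    (v1 != v2) && ~~ e v1 v2]).
  move=> /exists_inP[v vS /exists_inP[v1 v1N /exists_inP[v2 v2N /andP[v12 nev]]]].
  by exists v, v1, v2.
rewrite negb_exists_in => /forall_inP none.
have adj w w1 w2 : w \in S -> w1 \in nbh e S w -> w2 \in nbh e S w -> w1 != w2 -> e w1 w2.
  move=> wS w1N w2N w12; move: (none w wS); rewrite negb_exists_in.
  move=> /forall_inP/(_ w1 w1N); rewrite negb_exists_in => /forall_inP/(_ w2 w2N).
  by rewrite negb_and w12 negbK.
have cnbhS y : y \in S -> cnbh e S y = S.
  move=> yS; apply: connected_in_closed cS (cnbh_subset e yS) _ _.
    by apply/set0Pn; exists y; apply: cnbh_id.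
  move=> p q /setU1P[->|/setIdP[pS eyp]] qS epq; first by rewrite !inE qS epq orbT.
  have [->|qy] := eqVneq q y; first exact: cnbh_id.
  have yNp : y \in nbh e S p by rewrite inE yS e_sym.
  have qNp : q \in nbh e S p by rewrite inE qS.
  by rewrite /cnbh !inE qS (adj p y q pS yNp qNp) ?orbT // eq_sym.
have [x xS] := set0Pn _ S0.
case/negP: (noclq x xS); apply/forall_inP => y yx.
by rewrite !cnbhS // (subsetP (cnbh_subset e xS)).
Qed.

Lemma nbh_closed_in S A x : A \subset S -> closed_in e S A -> x \in A ->
  nbh e S x = nbh e A x.
Proof.
move=> sAS clA xA; apply/setP => y; rewrite !inE.
case: (boolP (e x y)) => exy; rewrite ?andbF ?andbT //.
by apply/idP/idP => [/(clA x y xA)->|/(subsetP sAS)].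
Qed.

Lemma min_degree_regular S v0 : connected_in e S -> v0 \in S ->
  {in S, forall y, deg_in S v0 <= deg_in S y} ->
  {in S, forall v, deg_in S v = deg_in S v0 ->
    {in nbh e S v, forall u, deg_in S u <= deg_in S v0}} ->
  {in S, forall y, deg_in S y = deg_in S v0}.
Proof.
move=> cS v0S vmin nomore y yS.
have AS : [set x in S | deg_in S x == deg_in S v0] = S.
  apply: connected_in_closed cS _ _ _.
  - by apply/subsetP => x /setIdP[].
  - by apply/set0Pn; exists v0; rewrite inE v0S eqxx.
  move=> p q /setIdP[pS /eqP dp] qS epq; rewrite inE qS eqn_leq vmin // andbT.
  by apply: (nomore p pS dp); rewrite inE qS.
by move: yS; rewrite -{1}AS => /setIdP[_ /eqP].
Qed.

End Components.

Section Weights.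
Local Open Scope ring_scope.
Variables (R : realFieldType) (D : nat) (c : nat -> R).
Hypothesis cD : c D = D%:R^-1.
Hypothesis c_rec : forall i, (1 <= i <= D - 1)%N -> i%:R * c i + c i.+1 = 1.

(* The value at 0 only makes [weight] nonincreasing on [0, D]. *)
Definition weight i := if i == 0%N then 1 else c i.

Lemma c_bounds i : (1 <= i <= D)%N -> 1 <= (i%:R + 1) * c i /\ i%:R * c i <= 1.
Proof.
case/andP=> i_gt0 /subnKC; move: (D - i)%N => k; elim: k i i_gt0 => [|k IH] i.
  rewrite addn0 => i_gt0 Di; have D0 : D%:R != 0 :> R by rewrite pnatr_eq0 -Di -lt0n.
  rewrite Di cD mulfV // mulrDl mulfV // mul1r lerDl invr_ge0 ler0n.
  by split.
rewrite addnS -addSn => i_gt0 Di; have [] := IH i.+1 isT Di; rewrite -natr1 => lb ub.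
have rec : i%:R * c i + c i.+1 = 1 by apply: c_rec; rewrite i_gt0 -Di; lia.
have i_ge1 : 1 <= i%:R :> R by rewrite ler1n.
by split; nra.
Qed.

Lemma c_ge0 i : (1 <= i <= D)%N -> 0 <= c i.
Proof.
move=> iD; have [lb _] := c_bounds iD.
have : 0 <= i%:R + 1 :> R by rewrite ler_wpDl.
nra.
Qed.

Lemma c_mono i : (1 <= i < D)%N -> c i.+1 <= c i.
Proof.
case/andP=> i_gt0 iD.
have [lb _] : 1 <= (i%:R + 1) * c i /\ i%:R * c i <= 1.
  by apply: c_bounds; rewrite i_gt0 ltnW.
have [_] : 1 <= (i.+1%:R + 1) * c i.+1 /\ i.+1%:R * c i.+1 <= 1 by apply: c_bounds.
have i_ge1 : 1 <= i%:R :> R by rewrite ler1n.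
rewrite -natr1; nra.
Qed.

Lemma weight_ge0 i : (i <= D)%N -> 0 <= weight i.
Proof. by rewrite /weight; case: eqP => // /eqP i0 iD; apply: c_ge0; rewrite lt0n i0. Qed.

Lemma weight_mono i j : (i <= j <= D)%N -> weight j <= weight i.
Proof.
case/andP=> ij jD; elim: j ij jD => [|j IH]; first by rewrite leqn0 => /eqP->.
rewrite leq_eqVlt => /predU1P[<-//|ij] jD.
apply: le_trans (IH ij (ltnW jD)); rewrite /weight /=.
case: eqP => [->|/eqP j0]; last by apply: c_mono; rewrite lt0n j0.
have [_] := c_bounds (i := 1) (leq_trans (ltn0Sn j) jD).
by rewrite mulr1n mul1r.
Qed.

Lemma weight_clique k : (k < D)%N -> k%:R * weight k + weight k.+1 <= 1.
Proof.
case: k => [|k] kD; first by rewrite mul0r add0r; apply: (weight_mono (i := 0) (j := 1)).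
by rewrite /weight /= c_rec // ltn0Sn /=; lia.
Qed.

Lemma c_mul_le k a n : (1 <= k <= D - 1)%N -> (2 <= a)%N -> (n <= k * a + 1)%N ->
  n%:R * c k <= a%:R.
Proof.
move=> kD a_ge2 na; have rec := c_rec kD.
have [lb _] : 1 <= (k.+1%:R + 1) * c k.+1 /\ k.+1%:R * c k.+1 <= 1.
  by apply: c_bounds; move: kD; lia.
have ck_ge0 : 0 <= c k by apply: c_ge0; move: kD; lia.
have ck1_ge0 : 0 <= c k.+1 by apply: c_ge0; move: kD; lia.
have k_ge1 : 1 <= k%:R :> R by rewrite ler1n; case/andP: kD.
have a_ge2' : 2 <= a%:R :> R by rewrite (ler_nat R 2 a).
rewrite -natr1 in lb.
have reg : (2 * k%:R + 1) * c k <= 2 by nra.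
have : n%:R * c k <= (k%:R * a%:R + 1) * c k.
  by rewrite ler_wpM2r // -natrM natr1 ler_nat -addn1.
nra.
Qed.

End Weights.

Section SumBlocks.
Local Open Scope ring_scope.

Lemma sum_blocks (R : numFieldType) (T : finType) (Q : {set T}) (B : T -> {set T})
    (F : T -> R) :
  {in Q, forall y, y \in B y /\ B y \subset Q} ->
  {in Q, forall y z, z \in B y -> B z = B y} ->
  \sum_(y in Q) F y = \sum_(y in Q) #|B y|%:R^-1 * \sum_(z in B y) F z.
Proof.
move=> blockQ Beq.
have sym y z : y \in Q -> z \in Q -> (z \in B y) = (y \in B z).
  move=> yQ zQ; apply/idP/idP => [/(Beq y yQ z)|/(Beq z zQ y)] ->.
    by case: (blockQ y yQ).
  by case: (blockQ z zQ).
symmetry; transitivity (\sum_(y in Q) \sum_(z in Q | z \in B y) #|B z|%:R^-1 * F z).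
  apply: eq_bigr => y yQ; have [_ sBQ] := blockQ y yQ; rewrite mulr_sumr.
  rewrite [RHS](eq_bigl (fun z => z \in B y)) => [|z]; last first.
    by apply/andP/idP => [[]//|zB]; rewrite (subsetP sBQ z zB).
  by apply: eq_bigr => z zB; rewrite (Beq y yQ z zB).
rewrite (exchange_big_dep (fun z => z \in Q)) /=; last by move=> y z _ /andP[].
apply: eq_bigr => z zQ; have [zB sBQ] := blockQ z zQ.
rewrite (eq_bigl (fun y => y \in B z)) => [|y]; last first.
  apply/andP/idP => [[yQ]|yB]; first by rewrite zQ sym.
  by have yQ := subsetP sBQ y yB; rewrite yQ zQ sym.
rewrite sumr_const -[(_ * F z) *+ _]mulr_natr mulrAC mulVf ?mul1r // pnatr_eq0 -lt0n.
by apply/card_gt0P; exists z.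
Qed.

End SumBlocks.

Section Claim.
Local Open Scope ring_scope.
Variables (T : finType) (e : rel T).
Hypotheses (e_sym : symmetric e) (e_irr : irreflexive e).
Variables (R : realFieldType) (D : nat) (c : nat -> R).
Hypotheses (D_ge3 : (3 <= D)%N) (cD : c D = D%:R^-1).
Hypothesis c_rec : forall i, (1 <= i <= D - 1)%N -> i%:R * c i + c i.+1 = 1.
Hypothesis deg_le : forall x, (#|nbh e setT x| <= D)%N.

Implicit Types (A K S : {set T}) (x y : T).
Local Notation deg_in S x := #|nbh e S x|.
Local Notation w := (weight c).

Lemma deg_in_le S x : (deg_in S x <= D)%N.
Proof. exact: leq_trans (deg_in_subset e x (subsetT S)) (deg_le x). Qed.

(* On a clique component K_(k+1), the total (k+1) c_k may exceed its alpha = 1. *)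
Definition wt_in S x : R :=
  if in_clique_component e S x then (deg_in S x).+1%:R^-1 else w (deg_in S x).

Lemma wt_in_closed S A x : A \subset S -> closed_in e S A -> x \in A ->
  wt_in S x = wt_in A x.
Proof.
move=> sAS clA xA.
have Neq y : y \in A -> nbh e S y = nbh e A y by apply: nbh_closed_in.
have cNeq y : y \in A -> cnbh e S y = cnbh e A y by move=> yA; rewrite /cnbh Neq.
rewrite /wt_in /in_clique_component Neq // cNeq //.
congr (if _ then _ else _); apply: eq_forallb_in => y yx.
by rewrite cNeq // (subsetP (cnbh_subset e xA)).
Qed.

Lemma sum_weight_le1 S K p k : p \in K -> #|K| = k.+1 ->
  {in K, forall z, k <= deg_in S z}%N -> (k < deg_in S p)%N ->
  \sum_(z in K) w (deg_in S z) <= 1.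
Proof.
move=> pK cardK kz kp; have kD : (k < D)%N := leq_trans kp (deg_in_le S p).
have cardKp : #|K :\ p| = k by move: cardK; rewrite (cardsD1 p) pK => -[].
have wp : w (deg_in S p) <= w k.+1 by apply: (weight_mono cD c_rec); rewrite kp deg_in_le.
have wz : \sum_(z in K :\ p) w (deg_in S z) <= k%:R * w k.
  apply: (@le_trans _ _ (\sum_(z in K :\ p) w k)).
    apply: ler_sum => z /setD1P[_ zK].
    by apply: (weight_mono cD c_rec); rewrite kz // deg_in_le.
  by rewrite sumr_const cardKp mulr_natl.
rewrite (big_setD1 p pK) /=; apply: le_trans (weight_clique cD c_rec kD).
by rewrite addrC lerD.
Qed.

Lemma clique_component_weight_le1 S S' y : connected_in e S -> S' \proper S ->
  y \in S' -> in_clique_component e S' y -> \sum_(z in cnbh e S' y) w (deg_in S z) <= 1.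
Proof.
rewrite properEneq => cS /andP[S'S sS'] yS' cly; set K := cnbh e S' y.
have sKS' : K \subset S' := cnbh_subset e yS'.
have KS : K != S by apply: contraNneq S'S => KS; rewrite eqEsubset sS' -KS sKS'.
have K0 : K != set0 by apply/set0Pn; exists y; apply: cnbh_id.
have [p [q [pK /setDP[qS qK] epq]]] := cS K (subset_trans sKS' sS') K0 KS.
have Kz z : z \in K -> cnbh e S' z = K by move=> zK; case: (clique_componentP cly zK).
have degz z : z \in K -> deg_in S' z = deg_in S' y.
  by move=> zK; apply: succn_inj; rewrite -!(card_cnbh e_irr) Kz.
apply: (sum_weight_le1 (p := p) (k := deg_in S' y)) => //; first exact: card_cnbh.
  by move=> z zK; rewrite -(degz z zK) deg_in_subset.
rewrite -(degz p pK); apply: proper_card; rewrite properE nbh_subset //=.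
apply/subsetPn; exists q; first by rewrite inE qS.
by apply: contra qK => qN; rewrite -(Kz p pK) /cnbh inE qN orbT.
Qed.

Lemma sum_weight_le_wt_in S S' : connected_in e S -> S' \proper S ->
  \sum_(y in S') w (deg_in S y) <= \sum_(y in S') wt_in S' y.
Proof.
move=> cS S'S; have sS' := proper_sub S'S.
set Q := [set y in S' | in_clique_component e S' y].
have sQ : Q \subset S' by apply/subsetP => y /setIdP[].
rewrite (big_setID Q) [X in _ <= X](big_setID Q) /= (setIidPr sQ).
apply: lerD; last first.
  apply: ler_sum => y /setDP[yS' yQ]; rewrite /wt_in ifN; last by rewrite inE yS' in yQ.
  by apply: (weight_mono cD c_rec); rewrite deg_in_subset // deg_in_le.
have blocks : {in Q, forall y, y \in cnbh e S' y /\ cnbh e S' y \subset Q}.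
  move=> y /setIdP[yS' cly]; split; first exact: cnbh_id.
  apply/subsetP => z zy; have [clz _] := clique_componentP cly zy.
  by rewrite inE clz (subsetP (cnbh_subset e yS')).
have same : {in Q, forall y z, z \in cnbh e S' y -> cnbh e S' z = cnbh e S' y}.
  by move=> y /setIdP[_ cly] z /(clique_componentP cly)[].
rewrite (sum_blocks _ blocks same); apply: ler_sum => y /setIdP[yS' cly].
rewrite /wt_in cly -(card_cnbh e_irr) -[X in _ <= X]mulr1 ler_wpM2l ?invr_ge0 //.
exact: clique_component_weight_le1 cS S'S yS' cly.
Qed.

Lemma sum_wt_in_split S A : A \subset S -> closed_in e S A ->
  \sum_(x in A) wt_in A x <= (alpha_on e A)%:R ->
  \sum_(x in S :\: A) wt_in (S :\: A) x <= (alpha_on e (S :\: A))%:R ->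
  \sum_(x in S) wt_in S x <= (alpha_on e S)%:R.
Proof.
move=> sAS clA IHA IHB.
have clB : closed_in e S (S :\: A).
  move=> p q /setDP[pS pA] qS epq; rewrite inE qS andbT; apply: contra pA => qA.
  by apply: clA qA pS _; rewrite e_sym.
rewrite (big_setID A) /= (setIidPr sAS).
rewrite (eq_bigr _ (fun x => wt_in_closed sAS clA)).
rewrite (eq_bigr _ (fun x => wt_in_closed (subsetDl S A) clB)).
apply: le_trans (lerD IHA IHB) _; rewrite -natrD ler_nat alpha_on_disjoint_union //.
by move=> p q pA /setDP[qS qA]; apply: contra qA; apply: clA pA qS.
Qed.

Lemma sum_wt_in_clique S x : connected_in e S -> x \in S -> in_clique_component e S x ->
  \sum_(y in S) wt_in S y <= (alpha_on e S)%:R.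
Proof.
move=> cS xS clx; have NS := connected_in_clique_component cS xS clx.
have wtS y : y \in S -> wt_in S y = #|S|%:R^-1.
  move=> yS; rewrite -NS in yS; have [cly Ny] := clique_componentP clx yS.
  by rewrite /wt_in cly -(card_cnbh e_irr) Ny NS.
have S_gt0 : (0 < #|S|)%N by apply/card_gt0P; exists x.
rewrite (eq_bigr _ wtS) sumr_const -[_ *+ _]mulr_natr mulVf ?pnatr_eq0 -?lt0n //.
by rewrite ler1n alpha_on_gt0 //; apply/set0Pn; exists x.
Qed.

Lemma sum_weight_delete_cnbh S v u : connected_in e S -> v \in S ->
  {in S, forall y, deg_in S v <= deg_in S y}%N -> u \in nbh e S v ->
  (deg_in S v < deg_in S u)%N ->
  \sum_(x in S :\: cnbh e S v) wt_in (S :\: cnbh e S v) x <=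
    (alpha_on e (S :\: cnbh e S v))%:R ->
  \sum_(x in S) w (deg_in S x) <= (alpha_on e S)%:R.
Proof.
move=> cS vS vmin uN vu IH; have sN := cnbh_subset e vS.
have S'S := setD_proper (cnbh_id e S v) vS.
rewrite (big_setID (cnbh e S v)) /= (setIidPr sN).
have N1 : \sum_(x in cnbh e S v) w (deg_in S x) <= 1.
  apply: (sum_weight_le1 (p := u)) vu; first exact: setU1r.
    exact: card_cnbh.
  by move=> z /(subsetP sN); apply: vmin.
apply: le_trans (lerD N1 (le_trans (sum_weight_le_wt_in cS S'S) IH)) _.
by rewrite addrC natr1 ler_nat alpha_on_delete_cnbh.
Qed.

Lemma sum_weight_regular S k : connected_in e S -> S != set0 ->
  {in S, forall x, deg_in S x = k} -> {in S, forall x, ~~ in_clique_component e S x} ->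
  #|S|%:R * w k <= (alpha_on e S)%:R.
Proof.
move=> cS S0 S_reg noclq; have [v vS] := set0Pn _ S0.
have k_gt0 : (0 < k)%N.
  rewrite lt0n; apply: contraNneq (noclq v vS) => k0.
  by apply: isolated_clique_component; rewrite S_reg.
have kD : (k <= D)%N by rewrite -(S_reg v vS) deg_in_le.
rewrite /weight eqn0Ngt k_gt0 /=; case: (ltngtP k D) kD => // [kD|kD] _.
  have card_gt : (k.+1 < #|S|)%N.
    rewrite ltnNge; apply: contra (noclq v vS) => S_le.
    have NS y : y \in S -> cnbh e S y = S.
      by move=> yS; apply/eqP; rewrite eqEcard cnbh_subset // card_cnbh // S_reg.
    by apply/forall_inP => y /(subsetP (cnbh_subset e vS)) yS; rewrite !NS.
  have cardS := greedy_alpha_bound e_sym e_irr cS S_reg k_gt0 vS.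
  apply: (c_mul_le cD c_rec _ _ cardS); first by rewrite k_gt0; move: kD; lia.
  rewrite ltnNge; apply/negP => a_le1.
  by have := leq_mul (leqnn k) a_le1; move: card_gt cardS; lia.
have [v' [v1 [v2 [v'S v1N v2N v12 nev]]]] := nonadjacent_nbh_pair e_sym cS S0 noclq.
have := brooks_alpha_bound e_sym e_irr cS S_reg _ v'S v1N v2N v12 nev.
rewrite kD => /(_ D_ge3).
have D_gt0 : 0 < D%:R :> R by rewrite ltr0n (ltnW (ltnW D_ge3)).
by rewrite cD ler_pdivrMr // -natrM ler_nat mulnC.
Qed.

Lemma sum_wt_in_le_alpha S : \sum_(x in S) wt_in S x <= (alpha_on e S)%:R.
Proof.
have [n] := ubnP #|S|; elim: n S => // n IH S ltSn.
have {}IH A : A \proper S -> \sum_(x in A) wt_in A x <= (alpha_on e A)%:R.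
  by move=> AS; apply: IH; apply: leq_trans (proper_card AS) _.
case: (closed_or_connected_in e S) => [[A [sAS A0 AS clA]]|cS].
  have ltAS : A \proper S by rewrite properEneq AS sAS.
  have /set0Pn[a aA] := A0.
  exact: sum_wt_in_split sAS clA (IH A ltAS) (IH _ (setD_proper aA (subsetP sAS a aA))).
have [->|S0] := eqVneq S set0; first by rewrite big_set0.
have [/exists_inP[x xS clx]|] := boolP [exists x in S, in_clique_component e S x].
  exact: sum_wt_in_clique cS xS clx.
rewrite negb_exists_in => /forall_inP noclq.
rewrite (eq_bigr (fun x => w (deg_in S x))) => [|x xS]; last by rewrite /wt_in ifN ?noclq.
have [x0 x0S] := set0Pn _ S0.
case: (arg_minnP (fun x => deg_in S x) x0S) => v0 v0S vmin.
case: (boolP [exists v in S, (deg_in S v == deg_in S v0) &&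
    [exists u in nbh e S v, deg_in S v0 < deg_in S u]%N]).
  move=> /exists_inP[v vS /andP[/eqP dv /exists_inP[u uN du]]].
  have vmin' : {in S, forall y, deg_in S v <= deg_in S y}%N by move=> y yS; rewrite dv vmin.
  apply: (sum_weight_delete_cnbh cS vS vmin' uN); first by rewrite dv.
  exact: IH (setD_proper (cnbh_id e S v) vS).
rewrite negb_exists_in => /forall_inP none.
have S_reg : {in S, forall y, deg_in S y = deg_in S v0}.
  apply: min_degree_regular cS v0S vmin _ => v vS dv u uN.
  by move: (none v vS); rewrite dv eqxx /= negb_exists_in leqNgt => /forall_inP/(_ u uN).
rewrite (eq_bigr (fun=> w (deg_in S v0))) => [|x xS]; last by rewrite S_reg.
by rewrite sumr_const -[_ *+ #|S|]mulr_natl; apply: sum_weight_regular cS S0 S_reg noclq.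
Qed.

End Claim.

Section WholeGraph.
Variables (T : finType) (e : rel T).
Hypothesis e_irr : irreflexive e.

Lemma deg_setT x : deg e x = #|nbh e setT x|.
Proof. by apply: eq_card => y; rewrite !inE. Qed.

Lemma connected_graph_in_setT : connected_graph e -> connected_in e setT.
Proof.
move=> conn A _ A0 AT; have [p pA] := set0Pn _ A0.
have /subsetPn[q _ qA] : ~~ ([set: T] \subset A) by rewrite subTset.
have [p' [q' [p'A q'A epq _]]] := connect_exit (conn p q) pA qA.
by exists p', q'; rewrite !inE q'A.
Qed.

Lemma clique_component_complete x : connected_graph e ->
  in_clique_component e setT x -> is_complete_graph e (max_degree e).+1.
Proof.
move=> conn clx.
have NT := connected_in_clique_component (connected_graph_in_setT conn) (in_setT x) clx.
have NTa a : cnbh e setT a = setT.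
  have ax : a \in cnbh e setT x by rewrite NT.
  by have [_ ->] := clique_componentP clx ax.
have deg_a a : deg e a = #|T|.-1.
  by have := card_cnbh e_irr setT a; rewrite NTa cardsT deg_setT => ->.
split.
  have T_gt0 : 0 < #|T| by apply/card_gt0P; exists x.
  have [a] := bigop.eq_bigmax (deg e) T_gt0.
  by rewrite /max_degree => ->; rewrite deg_a prednK.
move=> a b ab; move: (in_setT b).
by rewrite -(NTa a) /cnbh in_setU1 eq_sym (negbTE ab) inE => /andP[].
Qed.

End WholeGraph.

Section LevelSets.
Local Open Scope ring_scope.

Lemma sum_nat_pred1_le (R : numDomainType) (a : R) k m n : 0 <= a ->
  \sum_(m <= i < n | k == i) a <= a.
Proof.
move=> a_ge0; rewrite big_mkcond /=; have [kI|kI] := boolP (k \in index_iota m n).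
  have r_uniq : uniq (index_iota m n) by rewrite /index_iota iota_uniq.
  rewrite (bigD1_seq k) //= eqxx big1 ?addr0 // => i ik.
  by rewrite eq_sym (negbTE ik).
rewrite big1_seq // => i /andP[_ iI]; rewrite ifN //.
by apply: contraNneq kI => ->.
Qed.

Lemma sum_mul_card_level_le (R : numDomainType) (T : finType) (f : T -> nat)
    (a : nat -> R) m n : (forall x, 0 <= a (f x)) ->
  \sum_(m <= i < n) a i * #|[set x | f x == i]|%:R <= \sum_x a (f x).
Proof.
move=> a_ge0.
have level i : a i * #|[set x | f x == i]|%:R = \sum_x if f x == i then a (f x) else 0.
  rewrite -big_mkcond /= (eq_bigr (fun=> a i)) => [|x /eqP-> //].
  rewrite (eq_bigl (mem [set x | f x == i])) => [|x]; rewrite ?inE //.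
  by rewrite sumr_const mulr_natr.
rewrite (eq_bigr _ (fun i _ => level i)) exchange_big /=; apply: ler_sum => x _.
by rewrite -big_mkcond sum_nat_pred1_le.
Qed.

End LevelSets.

Local Open Scope ring_scope.

Theorem theorem2 (R : realFieldType) (T : finType) (e : rel T) (Delta : nat)
    (c : nat -> R) :
  (3 <= Delta)%N ->
  simple_graph e ->
  connected_graph e ->
  max_degree e = Delta ->
  ~ is_complete_graph e Delta.+1 ->
  c Delta = (Delta%:R)^-1 ->
  (forall i : nat, (1 <= i <= Delta - 1)%N -> i%:R * c i + c i.+1 = 1) ->
  \sum_(1 <= i < Delta.+1) c i * (#|Vdeg e i|)%:R <= (alpha e)%:R.
Proof.
move=> D_ge3 [e_sym e_irr] conn maxD notK cD c_rec.
have deg_le x : (deg e x <= Delta)%N by rewrite -maxD leq_bigmax.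
have noclq x : ~~ in_clique_component e setT x.
  by apply/negP => clx; apply: notK; rewrite -maxD; apply: clique_component_complete clx.
apply: (@le_trans _ _ (\sum_x weight c (deg e x))).
  have -> : \sum_(1 <= i < Delta.+1) c i * #|Vdeg e i|%:R =
            \sum_(1 <= i < Delta.+1) weight c i * #|[set x | deg e x == i]|%:R.
    by apply: eq_big_nat => i /andP[i_gt0 _]; rewrite /weight eqn0Ngt i_gt0.
  by apply: sum_mul_card_level_le => x; exact: (weight_ge0 cD c_rec (deg_le x)).
have -> : \sum_x weight c (deg e x) = \sum_(x in setT) wt_in e c setT x.
  by apply: eq_big => [x|x _]; rewrite ?in_setT // /wt_in (negbTE (noclq x)) deg_setT.
rewrite -alpha_on_setT; apply: (sum_wt_in_le_alpha e_sym e_irr D_ge3 cD c_rec) => x.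
by rewrite -deg_setT.
Qed.
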